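(* Let $k$ be a field of characteristic $\neq 2$ and let $\Psi:\mathfrak g_\boxtimes\to\mathfrak g=\mathfrak{sl}_2(k)\otimes_k\mathcal A$ be the Lie algebra homomorphism described in the context. Then $\Psi$ is surjective.
   Context: $\mathcal A=k[t,t^{-1},(1-t)^{-1}]\subset k(t)$, $t'=1-t^{-1}$, $t''=(1-t)^{-1}$. The Tetrahedron algebra $\mathfrak g_\boxtimes$ is the Lie algebra over $k$ with generators $X_{ij}$ ($i,j\in\{0,1,2,3\}$, $i\neq j$) and relations $X_{ij}+X_{ji}=0$ for $i\neq j$; $[X_{ij},X_{jk}]=2(X_{ij}+X_{jk})$ for mutually distinct $i,j,k$; $[X_{hi},[X_{hi},[X_{hi},X_{jk}]]]=4[X_{hi},X_{jk}]$ for mutually distinct $h,i,j,k$. With $x=\begin{pmatrix}-1&2\\0&1\end{pmatrix}$, $y=\begin{pmatrix}-1&0\\-2&1\end{pmatrix}$, $z=\begin{pmatrix}1&0\\0&-1\end{pmatrix}$, $\Psi$ is the Lie algebra homomorphism determined by $\Psi(X_{12})=x\otimes1$, $\Psi(X_{23})=y\otimes 1$, $\Psi(X_{31})=z\otimes 1$, $\Psi(X_{03})=y\otimes t+z\otimes(t-1)$, $\Psi(X_{01})=z\otimes t'+x\otimes(t'-1)$, $\Psi(X_{02})=x\otimes t''+y\otimes(t''-1)$. *)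

From HB Require Import structures.
From mathcomp Require Import all_boot all_order all_algebra.
Set Implicit Arguments. Unset Strict Implicit. Unset Printing Implicit Defensive.
Import GRing.Theory.
Local Open Scope ring_scope.

(* k(t), realized as the fraction field of k[t]. *)
Definition ratk (k : fieldType) := {fraction {poly k}}.
Definition tK (k : fieldType) : ratk k := tofrac 'X.
Definition cK (k : fieldType) (a : k) : ratk k := tofrac (a%:P).

(* The ring A = k[t, t^-1, (1-t)^-1] inside k(t). *)
Definition in_A (k : fieldType) (f : ratk k) : Prop :=
  exists (p : {poly k}) (a b : nat),
    f = tofrac p / ((tK k) ^+ a * (1 - tK k) ^+ b).

(* sl_2(k) (x)_k A, identified with the traceless 2x2 matrices with entries
   in A, with Lie bracket the commutator. *)
Definition in_sl2A (k : fieldType) (M : 'M[ratk k]_2) : Prop :=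
  \tr M = 0 /\ forall i j, in_A (M i j).

Definition mx2 (R : Type) (a b c d : R) : 'M[R]_2 :=
  \matrix_(i < 2, j < 2)
    if (i == 0 :> nat) then (if (j == 0 :> nat) then a else b)
    else (if (j == 0 :> nat) then c else d).

Definition mat_x (k : fieldType) : 'M[ratk k]_2 := mx2 (-1) 2%:R 0 1.
Definition mat_y (k : fieldType) : 'M[ratk k]_2 := mx2 (-1) 0 (- 2%:R) 1.
Definition mat_z (k : fieldType) : 'M[ratk k]_2 := mx2 1 0 0 (-1).

Definition t1 (k : fieldType) : ratk k := 1 - (tK k)^-1.
Definition t2 (k : fieldType) : ratk k := (1 - tK k)^-1.

Definition i0 : 'I_4 := @inord 3 0.
Definition i1 : 'I_4 := @inord 3 1.
Definition i2 : 'I_4 := @inord 3 2.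
Definition i3 : 'I_4 := @inord 3 3.

Definition is_lie (k : fieldType) (L : lmodType k) (br : L -> L -> L) : Prop :=
  [/\ forall (a : k) x y z, br (a *: x + y) z = a *: br x z + br y z,
      forall (a : k) x y z, br z (a *: x + y) = a *: br z x + br z y,
      forall x, br x x = 0
    & forall x y z, br x (br y z) + br y (br z x) + br z (br x y) = 0].

(* The family X satisfies the defining relations of the Tetrahedron algebra. *)
Definition tet_relations (k : fieldType) (L : lmodType k) (br : L -> L -> L)
    (X : 'I_4 -> 'I_4 -> L) : Prop :=
  [/\ forall i j, i != j -> X i j + X j i = 0,
      forall i j l, i != j -> j != l -> i != l ->
        br (X i j) (X j l) = 2%:R *: (X i j + X j l)
    & forall h i j l, [&& h != i, h != j, h != l, i != j, i != l & j != l] ->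
        br (X h i) (br (X h i) (br (X h i) (X j l)))
          = 4%:R *: br (X h i) (X j l)].

Definition lie_generated (k : fieldType) (L : lmodType k) (br : L -> L -> L)
    (X : 'I_4 -> 'I_4 -> L) : Prop :=
  forall S : L -> Prop,
    (forall i j, i != j -> S (X i j)) ->
    S 0 ->
    (forall x y, S x -> S y -> S (x + y)) ->
    (forall (a : k) x, S x -> S (a *: x)) ->
    (forall x y, S x -> S y -> S (br x y)) ->
    forall x, S x.

Definition lie_hom_to_sl2A (k : fieldType) (L : lmodType k) (br : L -> L -> L)
    (Psi : L -> 'M[ratk k]_2) : Prop :=
  (forall (a : k) x y, Psi (a *: x + y) = cK a *: Psi x + Psi y) /\
  (forall x y, Psi (br x y) = Psi x * Psi y - Psi y * Psi x).

Definition psi_values (k : fieldType) (L : lmodType k)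
    (X : 'I_4 -> 'I_4 -> L) (Psi : L -> 'M[ratk k]_2) : Prop :=
  [/\ Psi (X i1 i2) = mat_x k,
      Psi (X i2 i3) = mat_y k
    & Psi (X i3 i1) = mat_z k] /\
  [/\ Psi (X i0 i3) = tK k *: mat_y k + (tK k - 1) *: mat_z k,
      Psi (X i0 i1) = t1 k *: mat_z k + (t1 k - 1) *: mat_x k
    & Psi (X i0 i2) = t2 k *: mat_x k + (t2 k - 1) *: mat_y k].

(* The image [S] of Psi is closed under k-linear combinations and commutators.
   Call [a] in k(t) a coefficient of [S] when [S] contains e (x) a, f (x) a and
   h (x) a.  Since 2 is invertible, [e (x) a] alone suffices, because
   [e (x) a, f (x) 1] = h (x) a and [f (x) 1, h (x) a] = 2 f (x) a; and from
   [e (x) a, f (x) b] = h (x) ab the coefficients form a k-subalgebra of k(t).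
   It contains 1, as Psi(X12), Psi(X23), Psi(X31) span sl2(k).  The double
   bracket [e, [e, M]] = -2 M_10 e (and dually with f) extracts entries of
   Psi(X03), Psi(X01), Psi(X02), showing that t, t^-1 and (1 - t)^-1 are
   coefficients; these generate A as a k-algebra.  Finally a traceless M over A
   is h (x) M_00 + e (x) M_01 + f (x) M_10. *)

From HB Require Import structures.
From mathcomp Require Import all_boot all_order all_algebra.
From mathcomp Require Import ring.
Set Implicit Arguments. Unset Strict Implicit.
Import GRing.Theory.
Local Open Scope ring_scope.

Section Mx2.
Variable R : comNzRingType.
Implicit Types (a b c d s : R) (M : 'M[R]_2).

Lemma mx2_mul a b c d a' b' c' d' :
  mx2 a b c d * mx2 a' b' c' d' =
  mx2 (a * a' + b * c') (a * b' + b * d') (c * a' + d * c') (c * b' + d * d').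
Proof.
apply/matrixP => i j; rewrite !mxE !big_ord_recl big_ord0 !mxE /= !addr0.
by case: i => [[|[|i]] Hi] //; case: j => [[|[|j]] Hj].
Qed.

Lemma mx2_add a b c d a' b' c' d' :
  mx2 a b c d + mx2 a' b' c' d' = mx2 (a + a') (b + b') (c + c') (d + d').
Proof.
apply/matrixP => i j; rewrite !mxE.
by case: i => [[|[|i]] Hi] //; case: j => [[|[|j]] Hj].
Qed.

Lemma mx2_opp a b c d : - mx2 a b c d = mx2 (- a) (- b) (- c) (- d).
Proof.
apply/matrixP => i j; rewrite !mxE.
by case: i => [[|[|i]] Hi] //; case: j => [[|[|j]] Hj].
Qed.

Lemma mx2_scale s a b c d : s *: mx2 a b c d = mx2 (s * a) (s * b) (s * c) (s * d).
Proof.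
apply/matrixP => i j; rewrite !mxE.
by case: i => [[|[|i]] Hi] //; case: j => [[|[|j]] Hj].
Qed.

Lemma mx2_eta M : M = mx2 (M 0 0) (M 0 1) (M 1 0) (M 1 1).
Proof.
apply/matrixP => i j; rewrite !mxE.
by case: i => [[|[|i]] Hi] //; case: j => [[|[|j]] Hj] //=; congr (M _ _); apply/val_inj.
Qed.

Lemma mx2E01 a b c d : mx2 a b c d 0 1 = b.
Proof. by rewrite mxE. Qed.

Lemma mx2E10 a b c d : mx2 a b c d 1 0 = c.
Proof. by rewrite mxE. Qed.

Definition e_mx a := mx2 0 a 0 0.
Definition f_mx a := mx2 0 0 a 0.
Definition h_mx a := mx2 a 0 0 (- a).

Lemma traceless_mx2_decomp M :
  \tr M = 0 -> M = h_mx (M 0 0) + e_mx (M 0 1) + f_mx (M 1 0).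
Proof.
rewrite /mxtrace !big_ord_recl big_ord0 addr0 => /eqP; rewrite addr_eq0 => /eqP tr0.
rewrite [LHS]mx2_eta /e_mx /f_mx /h_mx !mx2_add.
have -> : M 1 1 = M (lift ord0 ord0) (lift ord0 ord0) by congr (M _ _); apply/val_inj.
by rewrite tr0; congr mx2; ring.
Qed.

End Mx2.

Ltac mx2_ring :=
  rewrite /e_mx /f_mx /h_mx ?(mx2_mul, mx2_scale, mx2_opp, mx2_add); congr mx2; ring.

Section Sl2Coefficients.
Variables (k : fieldType) (R : comNzRingType) (f : {rmorphism k -> R}).
Variable S : 'M[R]_2 -> Prop.
Hypothesis two_neq0 : 2%:R != 0 :> k.
Hypothesis S_add : forall M N, S M -> S N -> S (M + N).
Hypothesis S_scale : forall c M, S M -> S (f c *: M).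
Hypothesis S_comm : forall M N, S M -> S N -> S (M * N - N * M).

Lemma S_opp M : S M -> S (- M).
Proof. by move/(S_scale (-1)); rewrite rmorphN1 scaleN1r. Qed.

Lemma S_half M : S (2%:R *: M) -> S M.
Proof.
move/(S_scale 2%:R^-1); rewrite scalerA -(rmorph_nat f) -rmorphM mulVf //.
by rewrite rmorph1 scale1r.
Qed.

Definition sl2_coef a := [/\ S (e_mx a), S (f_mx a) & S (h_mx a)].

Hypothesis sl2_coef1 : sl2_coef 1.

Lemma sl2_coef_e a : S (e_mx a) -> sl2_coef a.
Proof.
case: sl2_coef1 => _ F1 _ Ea.
have Ha : S (h_mx a).
  have -> : h_mx a = e_mx a * f_mx 1 - f_mx 1 * e_mx a by mx2_ring.
  exact: S_comm.
split=> //; apply: S_half.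
have -> : 2%:R *: f_mx a = f_mx 1 * h_mx a - h_mx a * f_mx 1 by mx2_ring.
exact: S_comm.
Qed.

Lemma sl2_coef_h a : S (h_mx a) -> sl2_coef a.
Proof.
case: sl2_coef1 => E1 _ _ Ha; apply/sl2_coef_e/S_half.
have -> : 2%:R *: e_mx a = h_mx a * e_mx 1 - e_mx 1 * h_mx a by mx2_ring.
exact: S_comm.
Qed.

Lemma sl2_coef_f a : S (f_mx a) -> sl2_coef a.
Proof.
case: sl2_coef1 => E1 _ _ Fa; apply: sl2_coef_h.
have -> : h_mx a = e_mx 1 * f_mx a - f_mx a * e_mx 1 by mx2_ring.
exact: S_comm.
Qed.

Lemma sl2_coefD a b : sl2_coef a -> sl2_coef b -> sl2_coef (a + b).
Proof.
case=> Ea _ _ [Eb _ _]; apply: sl2_coef_e.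
have -> : e_mx (a + b) = e_mx a + e_mx b by mx2_ring.
exact: S_add.
Qed.

Lemma sl2_coefZ c a : sl2_coef a -> sl2_coef (f c * a).
Proof.
case=> Ea _ _; apply: sl2_coef_e.
have -> : e_mx (f c * a) = f c *: e_mx a by mx2_ring.
exact: S_scale.
Qed.

Lemma sl2_coefN a : sl2_coef a -> sl2_coef (- a).
Proof. by move/(sl2_coefZ (-1)); rewrite rmorphN1 mulN1r. Qed.

Lemma sl2_coef_half a : sl2_coef (2%:R * a) -> sl2_coef a.
Proof.
move/(sl2_coefZ 2%:R^-1); rewrite mulrA -(rmorph_nat f) -rmorphM mulVf //.
by rewrite rmorph1 mul1r.
Qed.

Lemma sl2_coefM a b : sl2_coef a -> sl2_coef b -> sl2_coef (a * b).
Proof.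
case=> Ea _ _ [_ Fb _]; apply: sl2_coef_h.
have -> : h_mx (a * b) = e_mx a * f_mx b - f_mx b * e_mx a by mx2_ring.
exact: S_comm.
Qed.

Lemma sl2_coefX a n : sl2_coef a -> sl2_coef (a ^+ n).
Proof.
move=> Ca; elim: n => [|n IHn]; first by rewrite expr0.
by rewrite exprS; apply: sl2_coefM.
Qed.

Lemma sl2_coef_horner a (p : {poly k}) : sl2_coef a -> sl2_coef (map_poly f p).[a].
Proof.
move=> Ca; elim/poly_ind: p => [|p c IHp].
  by rewrite rmorph0 horner0; have := sl2_coefZ 0 sl2_coef1; rewrite rmorph0 mul0r.
rewrite rmorphD rmorphM /= map_polyX map_polyC hornerMXaddC.
by apply: sl2_coefD; [apply: sl2_coefM | rewrite -[X in sl2_coef X]mulr1; apply: sl2_coefZ].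
Qed.

Lemma sl2_coef_entry10 M : S M -> sl2_coef (M 1 0).
Proof.
case: sl2_coef1 => E1 _ _ SM; apply/sl2_coef_e/S_half.
have -> : 2%:R *: e_mx (M 1 0) =
    - (e_mx 1 * (e_mx 1 * M - M * e_mx 1) - (e_mx 1 * M - M * e_mx 1) * e_mx 1).
  by rewrite [in RHS](mx2_eta M); mx2_ring.
by apply/S_opp/S_comm => //; apply: S_comm.
Qed.

Lemma sl2_coef_entry01 M : S M -> sl2_coef (M 0 1).
Proof.
case: sl2_coef1 => _ F1 _ SM; apply/sl2_coef_f/S_half.
have -> : 2%:R *: f_mx (M 0 1) =
    - (f_mx 1 * (f_mx 1 * M - M * f_mx 1) - (f_mx 1 * M - M * f_mx 1) * f_mx 1).
  by rewrite [in RHS](mx2_eta M); mx2_ring.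
by apply/S_opp/S_comm => //; apply: S_comm.
Qed.

Lemma traceless_mx2_in M :
  \tr M = 0 -> sl2_coef (M 0 0) -> sl2_coef (M 0 1) -> sl2_coef (M 1 0) -> S M.
Proof.
move=> tr0 [_ _ H00] [E01 _ _] [_ F10 _]; rewrite (traceless_mx2_decomp tr0).
by apply: S_add => //; apply: S_add.
Qed.

End Sl2Coefficients.

Lemma tofrac_horner (k : fieldType) (p : {poly k}) :
  tofrac p = (map_poly ((@tofrac _) \o polyC) p).[tK k].
Proof.
elim/poly_ind: p => [|p c IHp]; first by rewrite !rmorph0 horner0.
by rewrite !rmorphD !rmorphM /= map_polyX map_polyC hornerMXaddC -IHp.
Qed.

Lemma cK1 (k : fieldType) : cK (1 : k) = 1.
Proof. by rewrite /cK polyC1 rmorph1. Qed.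

Section TetrahedronImage.
Variables (k : fieldType) (L : lmodType k) (br : L -> L -> L).
Variables (X : 'I_4 -> 'I_4 -> L) (Psi : L -> 'M[ratk k]_2).
Hypothesis two_neq0 : 2%:R != 0 :> k.
Hypothesis Psi_hom : lie_hom_to_sl2A br Psi.
Hypothesis Psi_X : psi_values X Psi.

Definition in_range M := exists l, Psi l = M.

Let polyK : {rmorphism k -> ratk k} := (@tofrac _) \o polyC.

Lemma Psi0 : Psi 0 = 0.
Proof.
case: Psi_hom => Psi_lin _; have := Psi_lin 1 0 0.
by rewrite scale1r addr0 cK1 scale1r => /esym/eqP; rewrite -subr_eq0 addrK => /eqP.
Qed.

Lemma in_rangeD M N : in_range M -> in_range N -> in_range (M + N).
Proof.
case: Psi_hom => Psi_lin _ [l <-] [l' <-]; exists (l + l').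
by have := Psi_lin 1 l l'; rewrite cK1 !scale1r.
Qed.

Lemma in_rangeZ c M : in_range M -> in_range (polyK c *: M).
Proof.
case: Psi_hom => Psi_lin _ [l <-]; exists (c *: l).
by rewrite -[c *: l]addr0 Psi_lin Psi0 addr0.
Qed.

Lemma in_range_comm M N : in_range M -> in_range N -> in_range (M * N - N * M).
Proof. by case: Psi_hom => _ Psi_br [l <-] [l' <-]; exists (br l l'). Qed.

Lemma in_range_X i j : in_range (Psi (X i j)).
Proof. by exists (X i j). Qed.

Lemma sl2_coef_range1 : sl2_coef in_range 1.
Proof.
case: Psi_X => [[Px Py Pz] _].
have Sx := in_range_X i1 i2; have Sy := in_range_X i2 i3; have Sz := in_range_X i3 i1.
rewrite Px in Sx; rewrite Py in Sy; rewrite Pz in Sz.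
split; apply: (S_half two_neq0 in_rangeZ).
- have -> : 2%:R *: e_mx 1 = mat_x k + mat_z k by rewrite /mat_x /mat_z; mx2_ring.
  exact: in_rangeD.
- have -> : 2%:R *: f_mx 1 = - (mat_y k + mat_z k) by rewrite /mat_y /mat_z; mx2_ring.
  by apply: (S_opp in_rangeZ); apply: in_rangeD.
- have -> : 2%:R *: h_mx 1 = mat_z k + mat_z k by rewrite /mat_z; mx2_ring.
  exact: in_rangeD.
Qed.

Let range_closedN := sl2_coefN two_neq0 in_rangeZ in_range_comm sl2_coef_range1.
Let range_closedD := sl2_coefD two_neq0 in_rangeD in_rangeZ in_range_comm sl2_coef_range1.
Let range_closedM := sl2_coefM two_neq0 in_rangeZ in_range_comm sl2_coef_range1.
Let range_closedX := sl2_coefX two_neq0 in_rangeZ in_range_comm sl2_coef_range1.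
Let range_half := sl2_coef_half two_neq0 in_rangeZ in_range_comm sl2_coef_range1.
Let range_horner :=
  sl2_coef_horner two_neq0 in_rangeD in_rangeZ in_range_comm sl2_coef_range1.
Let range_entry10 := sl2_coef_entry10 two_neq0 in_rangeZ in_range_comm sl2_coef_range1.
Let range_entry01 := sl2_coef_entry01 two_neq0 in_rangeZ in_range_comm sl2_coef_range1.

Lemma sl2_coef_range_halfN a : sl2_coef in_range (- (2%:R * a)) -> sl2_coef in_range a.
Proof. by move/range_closedN; rewrite opprK; apply: range_half. Qed.

Lemma sl2_coef_range_t : sl2_coef in_range (tK k).
Proof.
case: Psi_X => _ [P03 _ _]; apply: sl2_coef_range_halfN.
have <- : Psi (X i0 i3) 1 0 = - (2%:R * tK k).
  by rewrite P03 /mat_y /mat_z !mx2_scale mx2_add mx2E10; ring.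
exact/range_entry10/in_range_X.
Qed.

Lemma sl2_coef_range_tV : sl2_coef in_range (tK k)^-1.
Proof.
case: Psi_X => _ [_ P01 _]; apply: sl2_coef_range_halfN.
have <- : Psi (X i0 i1) 0 1 = - (2%:R * (tK k)^-1).
  by rewrite P01 /mat_x /mat_z /t1 !mx2_scale mx2_add mx2E01; ring.
exact/range_entry01/in_range_X.
Qed.

Lemma sl2_coef_range_t2 : sl2_coef in_range (t2 k).
Proof.
case: Psi_X => _ [_ _ P02]; rewrite -(subrK 1 (t2 k)).
apply: range_closedD sl2_coef_range1; apply: sl2_coef_range_halfN.
have <- : Psi (X i0 i2) 1 0 = - (2%:R * (t2 k - 1)).
  by rewrite P02 /mat_x /mat_y !mx2_scale mx2_add mx2E10; ring.
exact/range_entry10/in_range_X.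
Qed.

Lemma sl2_coef_range_A g : in_A g -> sl2_coef in_range g.
Proof.
case=> p [a [b ->]]; rewrite invfM -!exprVn -[(1 - tK k)^-1]/(t2 k) tofrac_horner.
apply: range_closedM; first exact: range_horner sl2_coef_range_t.
by apply: range_closedM; apply: range_closedX;
  [exact: sl2_coef_range_tV | exact: sl2_coef_range_t2].
Qed.

End TetrahedronImage.

Theorem corollary1p3 (k : fieldType) (hk : (2%:R : k) != 0)
    (L : lmodType k) (br : L -> L -> L) (X : 'I_4 -> 'I_4 -> L)
    (Psi : L -> 'M[ratk k]_2) :
  is_lie br -> tet_relations br X -> lie_generated br X ->
  lie_hom_to_sl2A br Psi -> psi_values X Psi ->
  forall M : 'M[ratk k]_2, in_sl2A M -> exists l : L, Psi l = M.
Proof.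
move=> _ _ _ Psi_hom Psi_X M [trM0 M_A].
apply: (traceless_mx2_in (in_rangeD Psi_hom) trM0);
  exact: (sl2_coef_range_A hk Psi_hom Psi_X).
Qed.
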